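(* Let $T$ be a non-star tree and $x$ a vertex of $T$ with neighbors $x_1,\dots,x_n$, $n>2$. Suppose that for $i=1,\dots,m$, where $2\le m<n$, the tree $T_{(x_i,x)}$ is a neighbor $F$-tree of $x$. Let $T'$ be the connected component containing $x$ in $T-\{xx_i: i=1,\dots,m\}$. Suppose there exists a $(T',z)$-good 2-placement $\sigma$ with $dist(x,\sigma(x))\le 2$, where $z$ is a vertex of $T'$ (possibly $z=x$). Then there exists a $(T,z)$-good 2-placement $\sigma_z$ such that $\sigma_z(v)=\sigma(v)$ for every $v\in V(T')$ and $dist_T(x_i,\sigma_z(x_i))\le 2$ for $i=1,\dots,m$.
   Context: All graphs are finite, simple and undirected. A non-star tree is a tree not isomorphic to a star $K_{1,m}$ for any $m\ge0$. For an edge $ab$ of a tree $T$, $T_{(a,b)}$ denotes the connected component containing $a$ in $T-\{ab\}$; it is a neighbor $F$-tree of $b$ if it is a path with at most $3$ vertices and, when it has exactly $3$ vertices, $a$ is an end vertex of it. For a tree $S$, a permutation $\sigma$ of $V(S)$ is a 2-placement of $S$ if $\sigma(a)\sigma(b)\notin E(S)$ for every edge $ab\in E(S)$; $\sigma(S)\subseteq S^k$ means $dist_S(\sigma(a),\sigma(b))\le k$ for every edge $ab$ of $S$. For a non-star tree $S$ and vertex $w$, a fixed-point-free permutation $\sigma$ of $V(S)$ is an $(S,w)$-good 2-placement if (distances and degrees taken in $S$): (1) $\sigma$ is a 2-placement of $S$; (2) $\sigma(S)\subseteq S^5$; (3) $dist(w,\sigma(w))=1$; (4) $dist(y,\sigma(y))\le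 2$ for every neighbor $y$ of $w$; (5) $dist(y,\sigma(y))\le 4$ for every $y$ of degree $1$. *)

(* Graphs: a simple graph is a symmetric irreflexive
   relation e on a finite vertex type V.  Subgraphs are represented by a
   vertex set A : {set V} with the induced edge relation. *)
From mathcomp Require Import all_boot.
Set Implicit Arguments. Unset Strict Implicit. Unset Printing Implicit Defensive.

Section Defs.
Variable V : finType.
Variable e : rel V.

Definition eA (A : {set V}) : rel V :=
  fun u v => [&& u \in A, v \in A & e u v].

Definition dist_le (A : {set V}) (k : nat) (u v : V) : Prop :=
  exists p : seq V, [&& u \in A, path (eA A) u p, last u p == v & size p <= k].

Definition dist_eq (A : {set V}) (k : nat) (u v : V) : Prop :=
  dist_le A k u v /\ forall j, j < k -> ~ dist_le A j u v.

Definition deg (A : {set V}) (v : V) : nat := #|[set y | eA A v y]|.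

Definition is_connected (A : {set V}) : Prop :=
  forall u v, u \in A -> v \in A -> connect (eA A) u v.

Definition has_cycle (A : {set V}) : Prop :=
  exists c : seq V, [/\ uniq c, 3 <= size c & cycle (eA A) c].

Definition is_tree (A : {set V}) : Prop :=
  A != set0 /\ is_connected A /\ ~ has_cycle A.

(* isomorphic to K_{1,m} for some m >= 0 *)
Definition is_star (A : {set V}) : Prop :=
  exists2 c, c \in A &
    (forall v, v \in A -> v != c -> eA A c v) /\
    (forall u v, eA A u v -> (u == c) || (v == c)).

Definition consec (s : seq V) (u v : V) : Prop :=
  exists i, [/\ i.+1 < size s, nth u s i = u & nth u s i.+1 = v].

(* s lists the vertices of the path graph induced on A in path order *)
Definition is_path_seq (A : {set V}) (s : seq V) : Prop :=
  [/\ s != [::], uniq s, A =i s &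
      forall u v, eA A u v <-> (consec s u v \/ consec s v u)].

(* T_{(a,b)} for the tree on A: component containing a in A - {ab} *)
Definition comp_del (A : {set V}) (a b : V) : {set V} :=
  [set v | connect (fun u w => eA A u w &&
             ~~ (((u == a) && (w == b)) || ((u == b) && (w == a)))) a v].

Definition neighbor_Ftree (A : {set V}) (a b : V) : Prop :=
  exists s, [/\ is_path_seq (comp_del A a b) s, size s <= 3 &
              (size s = 3 -> a = head a s \/ a = last a s)].

(* component containing x in A - {x y : y \in X} *)
Definition comp_del_star (A : {set V}) (x : V) (X : {set V}) : {set V} :=
  [set v | connect (fun u w => eA A u w &&
             ~~ (((u == x) && (w \in X)) || ((w == x) && (u \in X)))) x v].

Definition good (A : {set V}) (w : V) (sigma : V -> V) : Prop :=
  [/\ is_tree A, ~ is_star A, w \in A,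
      [/\ {in A, forall v, sigma v \in A}, {in A &, injective sigma}
        & {in A, forall v, sigma v != v}] &
      [/\
          (forall a b, eA A a b -> ~~ eA A (sigma a) (sigma b)),
          (forall a b, eA A a b -> dist_le A 5 (sigma a) (sigma b)),
          dist_eq A 1 w (sigma w),
          (forall y, eA A w y -> dist_le A 2 y (sigma y)) &
          (forall y, y \in A -> deg A y = 1 -> dist_le A 4 y (sigma y))]].

End Defs.

From mathcomp Require Import all_boot.
From Stdlib Require Import IndefiniteDescription.
Set Implicit Arguments. Unset Strict Implicit. Unset Printing Implicit Defensive.

(* Removing the edges x--xi (xi in X) splits T into the core T'
   (the component of x, on which sigma is already good) and the branches
   C xi = T_(xi,x).  The F-tree hypothesis makes every branch a path of at
   most three vertices hanging from xi, and since deg x > 2 the branches are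
   pairwise disjoint, disjoint from T', and together with T' they cover T.
   Order X cyclically, xi |-> nX xi, and extend sigma branch by branch by a
   rotation that sends the branch of xi into itself minus xi, plus the root
   nX xi of the next branch:  [xi] : xi |-> nX xi,  [xi; c] : xi |-> c |-> nX xi,
   [xi; c; d] : xi |-> d |-> c |-> nX xi.  The result is a fixed-point-free
   permutation; every displacement stays inside a branch or goes through the
   path xi -- x -- nX xi, which gives the distance bounds 2, 4 and 5, and
   images of edges are non-adjacent because deep branch vertices only see
   their own branch. *)

Section Walks.
Variables (V : finType) (e : rel V).
Implicit Types (A B : {set V}) (u v w : V).

Lemma eA_setT u v : eA e [set: V] u v = e u v.
Proof. by rewrite /eA !inE. Qed.

Lemma dist_le_refl A u : u \in A -> dist_le e A 0 u u.
Proof. by move=> uA; exists [::]; rewrite uA /= eqxx. Qed.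

Lemma dist_le_edge A u v : eA e A u v -> dist_le e A 1 u v.
Proof. by move=> uv; exists [:: v]; case/and3P: (uv) => -> _ _; rewrite /= uv eqxx. Qed.

Lemma dist_le_trans A j k u v w :
  dist_le e A j u v -> dist_le e A k v w -> dist_le e A (j + k) u w.
Proof.
case=> p /and4P[uA pp /eqP lp sp] [q /and4P[_ pq /eqP lq sq]].
exists (p ++ q); rewrite uA cat_path pp lp pq last_cat lp lq eqxx size_cat.
exact: leq_add.
Qed.

Lemma dist_le_mono A j k u v : j <= k -> dist_le e A j u v -> dist_le e A k u v.
Proof.
by move=> jk [p /and4P[uA pp lp sp]]; exists p; rewrite uA pp lp (leq_trans sp).
Qed.

Lemma dist_le_subset A B k u v :
  A \subset B -> dist_le e A k u v -> dist_le e B k u v.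
Proof.
move=> /subsetP AB [p /and4P[uA pp lp sp]]; exists p; rewrite AB // lp sp !andbT.
by apply: sub_path pp => a b /and3P[aA bA ab]; rewrite /eA !AB.
Qed.

Lemma dist_le_setT_edge u v : e u v -> dist_le e [set: V] 1 u v.
Proof. by move=> uv; apply: dist_le_edge; rewrite eA_setT. Qed.

Lemma dist_le0 A u v : dist_le e A 0 u v -> u = v.
Proof. by case=> [[|a p]] /and4P[_ _ /eqP]. Qed.

Hypothesis e_sym : symmetric e.

Lemma eA_sym A : symmetric (eA e A).
Proof. by move=> a b; rewrite /eA e_sym andbCA. Qed.

Lemma dist_le_sym A k u v : dist_le e A k u v -> dist_le e A k v u.
Proof.
case=> p /and4P[uA pp /eqP <- sp]; apply: (dist_le_mono sp).
elim: p u uA pp {sp} => [|a p IH] u uA /=; first by move=> _; exact: dist_le_refl.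
case/andP=> ua pp; have aA : a \in A by case/and3P: ua.
rewrite -addn1; apply: dist_le_trans (IH a aA pp) (dist_le_edge _).
by rewrite eA_sym.
Qed.

Lemma nonadj_dist_sym A k u v :
  ~~ e u v /\ dist_le e A k u v -> ~~ e v u /\ dist_le e A k v u.
Proof. by case=> uv duv; rewrite e_sym; split=> //; apply: dist_le_sym. Qed.

Hypothesis e_irr : irreflexive e.

Lemma edge_neq u v : e u v -> (v == u) = false.
Proof. by apply: contraTF => /eqP->; rewrite e_irr. Qed.

End Walks.

Lemma connect_preserve (V : finType) (R : rel V) (P : pred V) a b :
  (forall u w, R u w -> P u -> P w) -> connect R a b -> P a -> P b.
Proof.
move=> stepP /connectP[p pth ->]; elim: p a pth => [|c p IH] a //=.
by case/andP=> ac pth Pa; apply: IH pth (stepP _ _ ac Pa).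
Qed.

Lemma next_neq (T : eqType) (p : seq T) y :
  uniq p -> 1 < size p -> y \in p -> next p y != y.
Proof.
rewrite next_nth; case: p => [|a q] //= /andP[aq uq] sq yp; rewrite yp.
have [->|ya] := eqVneq y a.
  by case: q aq sq {uq yp} => [|b q] //=; rewrite inE negb_or eq_sym => /andP[].
have yq : y \in q by move: yp; rewrite inE (negbTE ya).
have [lt|ge] := ltnP (index y q).+1 (size q); last by rewrite nth_default // eq_sym.
rewrite -{2}(nth_index a yq) nth_uniq ?index_mem //.
by rewrite eqn_leq ltnn.
Qed.

Section CyclicSuccessor.
Variables (T : finType) (X : {set T}).

Definition cyc_next : T -> T := next (enum X).

Lemma cyc_next_in xi : xi \in X -> cyc_next xi \in X.
Proof. by move=> xiX; rewrite -mem_enum /cyc_next mem_next mem_enum. Qed.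

Lemma cyc_next_inj : injective cyc_next.
Proof. exact: can_inj (prev_next (enum_uniq _)). Qed.

Lemma cyc_next_neq xi : 1 < #|X| -> xi \in X -> cyc_next xi != xi.
Proof. by move=> X2 xiX; apply: next_neq; rewrite ?enum_uniq -?cardE ?mem_enum. Qed.

End CyclicSuccessor.

Section PendantPaths.
Variables (V : finType) (e : rel V).
Hypothesis e_sym : symmetric e.

Inductive short_pendant (a : V) : seq V -> Prop :=
  | Pendant1 : short_pendant a [:: a]
  | Pendant2 c : e a c -> short_pendant a [:: a; c]
  | Pendant3 c d : e a c -> e c d -> ~~ e a d -> d != a ->
                   short_pendant a [:: a; c; d].

Lemma consec3 (a c d u v : V) :
  consec [:: a; c; d] u v -> (u = a /\ v = c) \/ (u = c /\ v = d).
Proof. by case=> [[|[|[|i]]]] [//= _ <- <-]; [left | right]. Qed.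

Lemma path_seq_pendant (A : {set V}) (s : seq V) (a : V) :
  is_path_seq e A s -> size s <= 3 ->
  (size s = 3 -> a = head a s \/ a = last a s) -> a \in s ->
  exists2 b, A =i b & short_pendant a b.
Proof.
case=> _ us As es ss end3 a_s.
have cons_e u v : consec s u v -> e u v.
  by move=> uv; case/and3P: (proj2 (es u v) (or_introl uv)).
have e_cons u v : u \in s -> v \in s -> e u v -> consec s u v \/ consec s v u.
  by move=> us' vs uv; apply/es; rewrite /eA !As us' vs.
case: s us As es ss end3 a_s cons_e e_cons => [|a1 [|a2 [|a3 [|? ?]]]] //=
  us As _ _ end3 a_s cons_e e_cons.
- by move: a_s; rewrite inE => /eqP->; exists [:: a1] => //; constructor.
- have e12 : e a1 a2 by apply: cons_e; exists 0.
  move: a_s; rewrite !inE => /orP[/eqP->|/eqP->]; first by exists [:: a1; a2]; last constructor.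
  exists (rev [:: a1; a2]); first by move=> v; rewrite As mem_rev.
  by constructor; rewrite e_sym.
- have e12 : e a1 a2 by apply: cons_e; exists 0.
  have e23 : e a2 a3 by apply: cons_e; exists 1.
  move: (us); rewrite /= !inE !negb_or !andbT => /andP[/andP[n12 n13] n23].
  have n_e13 : ~~ e a1 a3.
    apply/negP => /(e_cons _ _ _ _); rewrite !inE !eqxx !orbT => /(_ isT isT).
    by case=> /consec3 [] [] h1 h3; move: n12 n13 n23; rewrite ?h1 ?h3 ?eqxx ?andbF.
  case: (end3 erefl) => /= ->.
    by exists [:: a1; a2; a3]; last by constructor; rewrite // eq_sym.
  exists (rev [:: a1; a2; a3]); first by move=> v; rewrite As mem_rev.
  by constructor; rewrite // e_sym // e_sym.
Qed.
End PendantPaths.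

Section BranchShift.
Variables (V : finType) (e : rel V).
Hypotheses (e_sym : symmetric e) (e_irr : irreflexive e).

(* the rotation of a pendant path b into the foreign vertex n (see the
   opening comment); the last case is never used *)
Definition branch_shift (n : V) (b : seq V) (v : V) : V :=
  match b with
  | [:: _] => n
  | [:: a; c] => if v == a then c else n
  | [:: a; c; d] => if v == a then d else if v == d then c else n
  | _ => v
  end.

Variables (a n : V) (b : seq V).
Hypotheses (Hb : short_pendant e a b) (nb : n \notin b)
  (an : dist_le e [set: V] 2 a n)
  (n_far : forall w, w \in b -> w != a -> ~~ e w n).
Local Notation f := (branch_shift n b).
Local Notation dist k u v := (dist_le e [set: V] k u v).

Lemma child_near_next c : e a c -> dist 3 c n.
Proof. by rewrite e_sym => ca; exact: dist_le_trans (dist_le_setT_edge ca) an. Qed.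

Lemma grandchild_near_next c d : e a c -> e c d -> dist 4 d n.
Proof.
rewrite (e_sym c) => ac dc.
exact: dist_le_trans (dist_le_setT_edge dc) (child_near_next ac).
Qed.

Lemma branch_shift_range v : v \in b -> f v = n \/ (f v \in b /\ f v != a).
Proof.
case: b / Hb => [|c ac|c d ac cd _ da] /=; rewrite ?inE; first by left.
  by case: eqP => _ _; [right; rewrite eqxx orbT (edge_neq e_irr ac) | left].
case: eqP => _ _; first by right; rewrite eqxx !orbT.
by case: eqP => _; [right; rewrite eqxx orbT (edge_neq e_irr ac) | left].
Qed.

Lemma branch_shift_head : dist 2 a (f a).
Proof.
case: b / Hb => [|c ac|c d ac cd _ _] //=; rewrite eqxx.
  by apply: dist_le_mono (dist_le_setT_edge ac).
exact: dist_le_trans (dist_le_setT_edge ac) (dist_le_setT_edge cd).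
Qed.

Lemma branch_shift_move v : v \in b -> f v != v /\ dist 4 v (f v).
Proof.
have n_v w : w \in b -> n != w by move=> wb; apply: contraNneq nb => ->.
case: b / Hb n_v v => [|c ac|c d ac cd _ da] n_v v; rewrite !inE.
- by move/eqP->; split; [apply: n_v; rewrite inE | apply: dist_le_mono an].
- have ca := edge_neq e_irr ac.
  case/orP=> /eqP->; rewrite /= ?eqxx ?ca.
    by split=> //; apply: dist_le_mono (dist_le_setT_edge ac).
  by split; [apply: n_v; rewrite !inE eqxx orbT | apply: dist_le_mono (child_near_next ac)].
- have ca := edge_neq e_irr ac; have dc := edge_neq e_irr cd.
  have cd' : (c == d) = false by rewrite eq_sym dc.
  case/or3P=> /eqP->; rewrite /= ?eqxx ?ca ?(negbTE da) ?cd'.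
  + split=> //.
    by apply: dist_le_mono (dist_le_trans (dist_le_setT_edge ac) (dist_le_setT_edge cd)).
  + by split; [apply: n_v; rewrite !inE eqxx orbT | apply: dist_le_mono (child_near_next ac)].
  + split=> //.
    by rewrite e_sym in cd; apply: dist_le_mono (dist_le_setT_edge cd).
Qed.

Lemma branch_shift_inj : {in b &, injective f}.
Proof.
have n_v w : w \in b -> n <> w by move=> wb nw; move: nb; rewrite nw wb.
case: b / Hb n_v => [|c ac|c d ac cd _ da] n_v u v; rewrite !inE.
- by move=> /eqP-> /eqP->.
- have ca := edge_neq e_irr ac; have nc : n <> c by apply: n_v; rewrite !inE eqxx orbT.
  by case/orP=> /eqP-> /orP[]/eqP->; rewrite /= ?eqxx ?ca; congruence.
- have ca := edge_neq e_irr ac; have dc := edge_neq e_irr cd.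
  have cd' : (c == d) = false by rewrite eq_sym dc.
  have nc : n <> c by apply: n_v; rewrite !inE eqxx orbT.
  have nd : n <> d by apply: n_v; rewrite !inE eqxx !orbT.
  have dc' : d <> c by apply/eqP; rewrite dc.
  by case/or3P=> /eqP-> /or3P[]/eqP->; rewrite /= ?eqxx ?ca ?cd' ?dc ?(negbTE da); congruence.
Qed.

Lemma branch_shift_edge u v : u \in b -> v \in b -> e u v ->
  ~~ e (f u) (f v) /\ dist 5 (f u) (f v).
Proof.
case: b / Hb n_far => [|c ac|c d ac cd nad da] far_n; rewrite !inE.
- by move=> /eqP-> /eqP->; rewrite e_irr.
- have ca := edge_neq e_irr ac.
  have cn : ~~ e c n /\ dist 5 c n.
    split; first by apply: far_n; rewrite ?inE ?eqxx ?orbT ?ca.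
    exact: dist_le_mono (child_near_next ac).
  case/orP=> /eqP-> /orP[]/eqP->; rewrite /= ?eqxx ?ca ?e_irr //;
    by move=> _; apply: (nonadj_dist_sym e_sym).
- have ca := edge_neq e_irr ac; have dc := edge_neq e_irr cd.
  have cd' : (c == d) = false by rewrite eq_sym dc.
  have dn : ~~ e d n /\ dist 5 d n.
    split; first by apply: far_n; rewrite ?inE ?eqxx ?orbT.
    exact: dist_le_mono (grandchild_near_next ac cd).
  have nc : ~~ e n c /\ dist 5 n c.
    apply: (nonadj_dist_sym e_sym); split; first by apply: far_n; rewrite ?inE ?eqxx ?orbT ?ca.
    exact: dist_le_mono (child_near_next ac).
  have nda : ~~ e d a by rewrite e_sym.
  case/or3P=> /eqP-> /or3P[]/eqP->;
    rewrite /= ?eqxx ?ca ?cd' ?dc ?(negbTE da) ?e_irr ?(negbTE nad) ?(negbTE nda) //;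
    by move=> _; apply: (nonadj_dist_sym e_sym).
Qed.
End BranchShift.

Section CentreDecomposition.
Variables (V : finType) (e : rel V) (x : V) (X : {set V}).
Hypotheses (e_sym : symmetric e) (e_irr : irreflexive e).
Local Notation T' := (comp_del_star e [set: V] x X).
Local Notation C xi := (comp_del e [set: V] xi x).

Lemma centre_in_core : x \in T'.
Proof. by rewrite inE connect0. Qed.

Lemma root_in_branch xi : xi \in C xi.
Proof. by rewrite inE connect0. Qed.

Lemma core_edge u w : u \in T' -> e u w -> w \in T' \/ (u = x /\ w \in X).
Proof.
rewrite !inE => xu uw.
have [/andP[/eqP-> ->]|cut1] := boolP ((u == x) && (w \in X)); first by right.
have [/andP[/eqP-> _]|cut2] := boolP ((w == x) && (u \in X)); first by left; rewrite connect0.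
by left; apply: connect_trans xu (connect1 _); rewrite /= eA_setT uw negb_or cut1 cut2.
Qed.

Lemma core_deg y : y \in T' -> y != x -> deg e T' y = deg e [set: V] y.
Proof.
move=> yT yx; apply: eq_card => u; rewrite !inE eA_setT /eA yT /=.
case yu: (e y u); last by rewrite andbF.
by case: (core_edge yT yu) => [-> // | [yx' _]]; rewrite yx' eqxx in yx.
Qed.

Lemma branch_edge xi v w : v \in C xi -> e v w -> w \in C xi \/ (v = xi /\ w = x).
Proof.
rewrite !inE => xiv vw.
have [/andP[/eqP-> /eqP->]|cut1] := boolP ((v == xi) && (w == x)); first by right.
have [/andP[_ /eqP->]|cut2] := boolP ((v == x) && (w == xi)); first by left; rewrite connect0.
by left; apply: connect_trans xiv (connect1 _); rewrite /= eA_setT vw negb_or cut1 cut2.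
Qed.

Lemma branch_entry xi u w :
  e u w -> ~ (u = x /\ w = xi) -> u \notin C xi -> w \notin C xi.
Proof.
move=> uw not_cut; apply: contra => wC.
have wu : e w u by rewrite e_sym.
by case: (branch_edge wC wu) => // -[wxi ux]; case: not_cut.
Qed.

Hypothesis Hconn : is_connected e [set: V].

Lemma core_or_branch v : v \in T' \/ exists2 xi, xi \in X & v \in C xi.
Proof.
suff : (v \in T') || [exists xi in X, v \in C xi].
  by case/orP=> [|/exists_inP[xi]]; [left | right; exists xi].
pose P := [pred w | (w \in T') || [exists xi in X, w \in C xi]].
apply: (connect_preserve (P := P) _ (Hconn (in_setT x) (in_setT v))).
move=> u w; rewrite eA_setT /= => uw /orP[uT|/exists_inP[xi xiX uC]].
  case: (core_edge uT uw) => [-> // | [_ wX]].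
  by apply/orP; right; apply/exists_inP; exists w; rewrite ?root_in_branch.
case: (branch_edge uC uw) => [wC | [_ ->]]; last by rewrite centre_in_core.
by apply/orP; right; apply/exists_inP; exists xi.
by rewrite /= centre_in_core.
Qed.

Hypotheses (HXnb : forall xi, xi \in X -> e x xi)
  (Hdeg : 2 < deg e [set: V] x)
  (HF : forall xi, xi \in X -> neighbor_Ftree e [set: V] xi x).

(* the centre lies outside every branch: a branch has at most three vertices,
   while x and its neighbours are at least four *)
Lemma centre_notin_branch xi : xi \in X -> x \notin C xi.
Proof.
move=> xiX; apply/negP => xC.
have [s [[_ us Cs _] ss _]] := HF xiX.
have nbhd_sub : x |: [set y | eA e [set: V] x y] \subset C xi.
  apply/subsetP => y; rewrite in_setU1 inE eA_setT => /orP[/eqP-> //|xy].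
  case: (branch_edge xC xy) => // [[xxi _]].
  by move: (HXnb xiX); rewrite -xxi e_irr.
have := subset_leq_card nbhd_sub; rewrite cardsU1 inE eA_setT e_irr add1n.
rewrite (eq_card Cs) (card_uniqP us) -/(deg e [set: V] x) => /leq_trans/(_ ss).
by rewrite ltnS leqNgt Hdeg.
Qed.

Lemma branch_notin_core xi v : xi \in X -> v \in C xi -> v \notin T'.
Proof.
move=> xiX vC; apply/negP; rewrite inE => xv.
suff : v \notin C xi by rewrite vC.
apply: (connect_preserve (P := [pred w | w \notin C xi]) _ xv (centre_notin_branch xiX)).
move=> u w /andP[uw not_cut].
apply: branch_entry; first by rewrite -eA_setT.
by case=> ux wxi; move: not_cut; rewrite ux wxi xiX eqxx.
Qed.

Lemma branch_unique xi xj v : xi \in X -> xj \in X ->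
  v \in C xi -> v \in C xj -> xi = xj.
Proof.
move=> xiX xjX viC; rewrite inE => xjv; apply/eqP/negPn/negP => nij.
suff /andP[] : (v \in C xj) && (v \notin C xi) by rewrite viC.
apply: (connect_preserve (P := [pred w | (w \in C xj) && (w \notin C xi)]) _ xjv); last first.
  rewrite /= root_in_branch /=; apply: branch_entry (centre_notin_branch xiX).
    exact: HXnb.
  by case=> _ xji; rewrite xji eqxx in nij.
move=> u w step /= /andP[ujC uiC].
have wjC : w \in C xj by move: ujC; rewrite !inE => /connect_trans; apply; apply: connect1.
have uw : e u w by case/andP: step; rewrite eA_setT.
rewrite wjC; apply: branch_entry uiC => // -[ux _].
by move: ujC; rewrite ux (negbTE (centre_notin_branch xjX)).
Qed.

(* From now on X has at least two elements, so that nX moves every xi. *)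
Hypothesis HX2 : 1 < #|X|.
Local Notation nX := (cyc_next X).
Local Notation dist k u v := (dist_le e [set: V] k u v).

Variable bf : V -> seq V.
Hypothesis Hbf : forall xi, xi \in X -> C xi =i bf xi /\ short_pendant e xi (bf xi).
Variable sigma : V -> V.

Definition extension (v : V) : V :=
  if [pick xi in X | v \in C xi] is Some xi then branch_shift (nX xi) (bf xi) v
  else sigma v.

Lemma extension_core v : v \in T' -> extension v = sigma v.
Proof.
move=> vT; rewrite /extension; case: pickP => [xi /andP[xiX vC] | //].
by move: vT; rewrite (negbTE (branch_notin_core xiX vC)).
Qed.

Lemma extension_branch xi v : xi \in X -> v \in C xi ->
  extension v = branch_shift (nX xi) (bf xi) v.
Proof.
move=> xiX vC; rewrite /extension; case: pickP => [xj /andP[xjX vCj] | /(_ xi)].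
  by rewrite (branch_unique xjX xiX vCj vC).
by rewrite xiX vC.
Qed.

(* the hypotheses under which branch_shift (nX xi) (bf xi) is well behaved *)
Lemma next_root_conditions xi : xi \in X ->
  [/\ nX xi \notin bf xi, dist 2 xi (nX xi)
    & forall w, w \in bf xi -> w != xi -> ~~ e w (nX xi)].
Proof.
move=> xiX; have [Cb _] := Hbf xiX; have nXX := cyc_next_in xiX.
have nC : nX xi \notin C xi.
  apply: contraNN (cyc_next_neq HX2 xiX) => nC.
  by rewrite -(branch_unique xiX nXX nC (root_in_branch _)).
have xix : e xi x by rewrite e_sym HXnb.
split; first by rewrite -Cb.
  exact: dist_le_trans (dist_le_setT_edge xix) (dist_le_setT_edge (HXnb nXX)).
move=> w; rewrite -Cb => wC wxi; apply/negP => wn.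
case: (branch_edge wC wn) => [nC' | [wxi' _]]; first by rewrite nC' in nC.
by rewrite wxi' eqxx in wxi.
Qed.

Lemma extension_branch_range xi v : xi \in X -> v \in C xi ->
  extension v = nX xi \/ (extension v \in C xi /\ extension v != xi).
Proof.
move=> xiX vC; have [Cb Hb] := Hbf xiX.
by rewrite (extension_branch xiX vC) Cb; apply: branch_shift_range; rewrite -?Cb.
Qed.

Lemma extension_branch_move xi v : xi \in X -> v \in C xi ->
  extension v != v /\ dist 4 v (extension v).
Proof.
move=> xiX vC; have [Cb Hb] := Hbf xiX; have [nb an _] := next_root_conditions xiX.
rewrite (extension_branch xiX vC).
by apply: (branch_shift_move e_sym e_irr Hb nb an); rewrite -Cb.
Qed.

Lemma extension_root xi : xi \in X -> dist 2 xi (extension xi).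
Proof.
move=> xiX; have [_ Hb] := Hbf xiX; have [_ an _] := next_root_conditions xiX.
by rewrite (extension_branch xiX (root_in_branch _)); apply: (branch_shift_head Hb an).
Qed.

Lemma extension_branch_inj xi : xi \in X -> {in C xi &, injective extension}.
Proof.
move=> xiX u v uC vC; have [Cb Hb] := Hbf xiX; have [nb _ _] := next_root_conditions xiX.
by rewrite !(extension_branch xiX) //; apply: (branch_shift_inj e_irr Hb nb); rewrite -?Cb.
Qed.

Lemma extension_branch_edge xi u v : xi \in X -> u \in C xi -> v \in C xi -> e u v ->
  ~~ e (extension u) (extension v) /\ dist 5 (extension u) (extension v).
Proof.
move=> xiX uC vC uv; have [Cb Hb] := Hbf xiX; have [_ an far] := next_root_conditions xiX.
rewrite !(extension_branch xiX) //.
by apply: (branch_shift_edge e_sym e_irr Hb an far); rewrite -?Cb.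
Qed.

Lemma extension_branch_out xi v : xi \in X -> v \in C xi -> extension v \notin T'.
Proof.
move=> xiX vC; case: (extension_branch_range xiX vC) => [-> | [wC _]].
  exact: branch_notin_core (cyc_next_in xiX) (root_in_branch _).
exact: branch_notin_core xiX wC.
Qed.

Variable z : V.
Hypotheses (Hgood : good e T' z sigma) (Hx : dist_le e T' 2 x (sigma x)).

Lemma extension_fixpoint_free v : extension v != v.
Proof.
case: (core_or_branch v) => [vT | [xi xiX vC]].
  by case: Hgood => _ _ _ [_ _ sfp] _; rewrite extension_core // sfp.
by case: (extension_branch_move xiX vC).
Qed.

(* injectivity: the core is mapped into itself, a branch into itself and the
   next root, and the cyclic successor is injective *)
Lemma extension_inj : injective extension.
Proof.
case: Hgood => _ _ _ [sT' sinj _] _.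
have core_branch u v xi : u \in T' -> xi \in X -> v \in C xi ->
    extension u <> extension v.
  move=> uT xiX vC same; have := extension_branch_out xiX vC.
  by rewrite -same extension_core // sT'.
move=> u v; case: (core_or_branch u) => [uT | [xi xiX uC]];
  case: (core_or_branch v) => [vT | [xj xjX vC]].
- by rewrite !extension_core //; apply: sinj.
- by move/(core_branch _ _ _ uT xjX vC).
- by move/esym/(core_branch _ _ _ vT xiX uC).
move=> same; suff eij : xi = xj by subst xj; apply: (extension_branch_inj xiX).
have next_deep xk w : xk \in X -> w \in C xk -> w != xk -> forall xl, xl \in X -> nX xl <> w.
  move=> xkX wC wxk xl xlX nw; case/negP: wxk; rewrite -nw; apply/eqP.
  by apply: branch_unique (cyc_next_in xlX) xkX (root_in_branch _) _; rewrite nw.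
case: (extension_branch_range xiX uC) => [ru | [ruC rux]];
  case: (extension_branch_range xjX vC) => [rv | [rvC rvx]].
- by apply: (@cyc_next_inj _ X); rewrite -ru -rv.
- by case: (next_deep _ _ xjX rvC rvx _ xiX); rewrite -ru same.
- by case: (next_deep _ _ xiX ruC rux _ xjX); rewrite -rv same.
- by apply: branch_unique xiX xjX ruC _; rewrite same.
Qed.

(* the removed edges x -- xi: sigma x lies in the core, away from x, so it
   sees no vertex outside the core, and sigma x -- x -- xi -- image of xi
   has length at most 5 *)
Lemma extension_centre_edge xi : xi \in X ->
  ~~ e (extension x) (extension xi) /\ dist 5 (extension x) (extension xi).
Proof.
move=> xiX; case: Hgood => _ _ _ [sT' _ sfp] _.
have xT := centre_in_core; rewrite (extension_core xT); split.
  apply/negP => sx_xi; case: (core_edge (sT' _ xT) sx_xi) => [inT | [sx _]].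
    by move: (extension_branch_out xiX (root_in_branch _)); rewrite inT.
  by move: (sfp _ xT); rewrite sx eqxx.
have sx_x := dist_le_sym e_sym (dist_le_subset (subsetT _) Hx).
exact: dist_le_trans sx_x (dist_le_trans (dist_le_setT_edge (HXnb xiX)) (extension_root xiX)).
Qed.

Lemma extension_edge a b : e a b ->
  ~~ e (extension a) (extension b) /\ dist 5 (extension a) (extension b).
Proof.
move=> ab; case: (core_or_branch a) => [aT | [xi xiX aC]].
  case: (core_edge aT ab) => [bT | [-> bX]]; last exact: extension_centre_edge.
  case: Hgood => _ _ _ [sT' _ _] [s1 s2 _ _ _].
  have abT : eA e T' a b by rewrite /eA aT bT ab.
  rewrite !extension_core //; split; last exact: dist_le_subset (subsetT _) (s2 _ _ abT).
  by move: (s1 _ _ abT); rewrite /eA !sT'.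
case: (branch_edge aC ab) => [bC | [-> ->]]; first exact: (extension_branch_edge xiX).
exact/(nonadj_dist_sym e_sym)/extension_centre_edge.
Qed.

Lemma extension_centre_nbr y : e z y -> dist 2 y (extension y).
Proof.
case: Hgood => _ _ zT _ [_ _ _ s4 _] zy.
case: (core_edge zT zy) => [yT | [_ yX]]; last exact: extension_root.
rewrite extension_core //; apply: dist_le_subset (subsetT _) (s4 _ _).
by rewrite /eA zT yT zy.
Qed.

(* condition (5): a leaf of T is a leaf of T' or lies in a branch *)
Lemma extension_leaf y : deg e [set: V] y = 1 -> dist 4 y (extension y).
Proof.
move=> dy; case: (core_or_branch y) => [yT | [xi xiX yC]].
  have yx : y != x by apply: contraTneq Hdeg => <-; rewrite dy.
  case: Hgood => _ _ _ _ [_ _ _ _ s5].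
  rewrite extension_core //; apply: dist_le_subset (subsetT _) (s5 _ yT _).
  by rewrite core_deg.
by case: (extension_branch_move xiX yC).
Qed.

Lemma extension_good : is_tree e [set: V] -> ~ is_star e [set: V] ->
  good e [set: V] z extension.
Proof.
move=> Htree Hnonstar; case: Hgood => _ _ zT [_ _ sfp] [_ _ [s3 _] _ _].
split=> //; first split.
- by move=> v; rewrite in_setT.
- by move=> u v _ _; apply: extension_inj.
- by move=> v _; apply: extension_fixpoint_free.
split.
- by move=> a b; rewrite !eA_setT => /extension_edge[].
- by move=> a b; rewrite eA_setT => /extension_edge[].
- rewrite extension_core //; split; first exact: dist_le_subset (subsetT _) s3.
  move=> j; rewrite ltnS leqn0 => /eqP-> /dist_le0 same.
  by move: (sfp _ zT); rewrite -same eqxx.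
- by move=> y; rewrite eA_setT; apply: extension_centre_nbr.
- by move=> y _; apply: extension_leaf.
Qed.

End CentreDecomposition.

Theorem corollary3p1 (V : finType) (e : rel V)
  (e_sym : symmetric e) (e_irr : irreflexive e)
  (Htree : is_tree e [set: V]) (Hnonstar : ~ is_star e [set: V])
  (x : V) (X : {set V})
  (Hn : 2 < deg e [set: V] x)
  (HXnb : forall xi, xi \in X -> e x xi)
  (Hm : 2 <= #|X| < deg e [set: V] x)
  (HF : forall xi, xi \in X -> neighbor_Ftree e [set: V] xi x)
  (z : V) (Hz : z \in comp_del_star e [set: V] x X)
  (sigma : V -> V)
  (Hgood : good e (comp_del_star e [set: V] x X) z sigma)
  (Hx : dist_le e (comp_del_star e [set: V] x X) 2 x (sigma x)) :
  exists sigma_z : V -> V,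
    [/\ good e [set: V] z sigma_z,
        {in comp_del_star e [set: V] x X, forall v, sigma_z v = sigma v} &
        forall xi, xi \in X -> dist_le e [set: V] 2 xi (sigma_z xi)].
Proof.
have HX2 : 1 < #|X| by case/andP: Hm.
have Hconn : is_connected e [set: V] by case: Htree => _ [].
have pendant xi : exists b, xi \in X ->
    comp_del e [set: V] xi x =i b /\ short_pendant e xi b.
  have [xiX | _] := boolP (xi \in X); last by exists [::].
  have [s [Ps ss end3]] := HF xi xiX.
  have xis : xi \in s by case: Ps => _ _ Cs _; rewrite -Cs root_in_branch.
  by have [b Cb Hb] := path_seq_pendant e_sym Ps ss end3 xis; exists b.
have [bf Hbf] := functional_choice _ pendant.
exists (extension e x X bf sigma); split.
- by apply: extension_good.
- by move=> v; apply: extension_core.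
- by move=> xi; apply: extension_root.
Qed.
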